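(* Let $G$ be a strongly Deza graph with parameters $(n,k,b,a)$ having exactly four distinct eigenvalues $k,\theta_2,\theta_3,\theta_4$ with multiplicities $1,m_2,m_3,m_4$ (all positive), where $\theta_4=-\theta_3$ and $m_3=m_4$. Then $\theta_2=-k/m_2$ is an integer with $\theta_2\leqslant -1$, and $$\theta_{3,4}=\pm\sqrt{k\left(1+\frac{(\theta_2+1)(m_2+1)}{n-m_2-1}\right)}.$$
   Context: All graphs are finite, simple and undirected; eigenvalues of a graph are those of its adjacency matrix. A Deza graph with parameters $(n,k,b,a)$, where $b\geqslant a$, is a $k$-regular graph on $n$ vertices, which is neither complete nor edgeless, such that any two distinct vertices have exactly $b$ or exactly $a$ common neighbours. If $b>a$, the children $G_A$ and $G_B$ of $G$ are the graphs on the vertex set of $G$ in which two distinct vertices are adjacent if and only if they have exactly $a$ (for $G_A$), respectively exactly $b$ (for $G_B$), common neighbours in $G$; if $b=a$, $G_A$ is the complete graph and $G_B$ is the edgeless graph. A strongly regular graph with parameters $(n,k,\lambda,\mu)$ is a $k$-regular graph on $n$ vertices, neither complete nor edgeless, in which any two adjacent vertices have exactly $\lambda$ common neighbours and any two distinct non-adjacent vertices have exactly $\mu$ common neighbours (disconnected examples, i.e. disjoint unions of at least two cliques of equal size, are allowed). A strongly Deza graph is a Deza graph both of whose children are strongly regular graphs. *)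

From mathcomp Require Import all_boot all_order all_algebra all_field.
From mathcomp Require Import algC.
Set Implicit Arguments. Unset Strict Implicit. Unset Printing Implicit Defensive.
Import GRing.Theory Num.Theory.

Definition is_graph (T : finType) (e : rel T) : Prop :=
  symmetric e /\ irreflexive e.

Definition common (T : finType) (e : rel T) (x y : T) : nat :=
  #|[set z | e x z && e y z]|.

Definition regular (T : finType) (e : rel T) (k : nat) : Prop :=
  forall x, #|[set y | e x y]| = k.

Definition complete (T : finType) (e : rel T) : Prop :=
  forall x y, x != y -> e x y.

Definition edgeless (T : finType) (e : rel T) : Prop :=
  forall x y, ~~ e x y.

Definition deza (T : finType) (e : rel T) (n k b a : nat) : Prop :=
  is_graph e /\ #|T| = n /\ regular e k /\ ~ complete e /\ ~ edgeless e /\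
  a <= b /\
  (forall x y, x != y -> common e x y = b \/ common e x y = a).

(* Children G_A and G_B (when b = a: G_A complete, G_B edgeless). *)
Definition childA (T : finType) (e : rel T) (b a : nat) : rel T :=
  fun x y => (x != y) && ((b == a) || (common e x y == a)).
Definition childB (T : finType) (e : rel T) (b a : nat) : rel T :=
  fun x y => [&& x != y, b != a & common e x y == b].

Definition srg (T : finType) (e : rel T) (n k l m : nat) : Prop :=
  is_graph e /\ #|T| = n /\ regular e k /\ ~ complete e /\ ~ edgeless e /\
  (forall x y, x != y -> e x y -> common e x y = l) /\
  (forall x y, x != y -> ~~ e x y -> common e x y = m).

Definition strongly_regular (T : finType) (e : rel T) : Prop :=
  exists n k l m, srg e n k l m.

Definition strongly_deza (T : finType) (e : rel T) (n k b a : nat) : Prop :=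
  [/\ deza e n k b a, strongly_regular (childA e b a)
                    & strongly_regular (childB e b a)].

Definition adjmx (n : nat) (e : rel 'I_n) : 'M[algC]_n :=
  \matrix_(i, j) ((e i j)%:R)%R.

From mathcomp Require Import all_boot all_order all_algebra all_field.
From mathcomp Require Import algC algnum.
From mathcomp Require Import ring.
Import GRing.Theory Num.Theory.
Local Open Scope ring_scope.

(* For any complex matrix A whose characteristic polynomial splits as
   \prod_(x <- r) ('X - x), Schur triangularization gives tr A = \sum_r x and
   tr A^2 = \sum_r x^2.  For the adjacency matrix of a simple k-regular graph
   on n vertices, tr A = 0 (no loops) and tr A^2 = n k (the diagonal of A^2
   holds the degrees).  With the spectrum k, t2^(m2), t3^(m3), (-t3)^(m3)
   these read
       k + m2 t2 = 0   and   k^2 + m2 t2^2 + 2 m3 t3^2 = n k,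
   and n = 1 + m2 + 2 m3.  The first equation gives t2 = -k/m2 < 0; t2 is
   rational and, as an eigenvalue of an integer matrix, an algebraic integer,
   hence an integer, so t2 <= -1.  Substituting k = -m2 t2 into the second
   equation gives t3^2 = k (1 + (t2+1)(m2+1)/(n-m2-1)), so t3 is one of the
   two square roots of this number. *)

Lemma char_poly_conj {F : fieldType} {n} (A P : 'M[F]_n) : P \in unitmx ->
  char_poly (P *m A *m invmx P) = char_poly A.
Proof.
move=> Pu; rewrite /char_poly /char_poly_mx.
set Q := map_mx polyC P; set Q' := map_mx polyC (invmx P).
have QQ' : Q *m Q' = 1%:M by rewrite -map_mxM mulmxV // map_mx1.
have -> : 'X%:M - map_mx polyC (P *m A *m invmx P) =
          Q *m ('X%:M - map_mx polyC A) *m Q'.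
  rewrite mulmxBr mulmxBl !map_mxM -!mulmxA; congr (_ - _).
  by rewrite mulmxA scalar_mxC -mulmxA QQ' mulmx1.
by rewrite !det_mulmx mulrAC -det_mulmx QQ' det1 mul1r.
Qed.

Lemma mxtrace_conj {F : fieldType} {n} (A P : 'M[F]_n) : P \in unitmx ->
  \tr (P *m A *m invmx P) = \tr A.
Proof. by move=> Pu; rewrite mxtrace_mulC mulmxA mulVmx // mul1mx. Qed.

Lemma trig_mx_sqr_diag (R : comNzRingType) n (T : 'M[R]_n) i :
  is_trig_mx T -> (T *m T) i i = T i i ^+ 2.
Proof.
move=> /is_trig_mxP Ttrig; rewrite mxE (bigD1 i) //= big1 ?addr0 ?expr2 //.
move=> j /negPf neq_ji; case: (ltngtP i j) => [lt_ij|lt_ji|/val_inj eq_ij].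
- by rewrite Ttrig // mul0r.
- by rewrite (Ttrig j i) // mulr0.
- by rewrite eq_ij eqxx in neq_ji.
Qed.

Lemma spectrum_power_sums (C : numClosedFieldType) n (A : 'M[C]_n)
    (r : seq C) :
  char_poly A = \prod_(x <- r) ('X - x%:P) ->
  [/\ size r = n, \tr A = \sum_(x <- r) x &
      \tr (A *m A) = \sum_(x <- r) x ^+ 2].
Proof.
move=> charA.
have size_r : size r = n.
  by have := size_char_poly A; rewrite charA size_prod_XsubC => -[].
case: n A charA size_r => [|n] A charA size_r.
  by case: r size_r {charA} => // _; rewrite /mxtrace !big_ord0 !big_nil.
have [P /unitarymx_unit Pu] := Schur A (ltn0Sn n).
rewrite /similar_to conjumx // => Ttrig.
set T := P *m A *m invmx P in Ttrig.
have diag_r : perm_eq [seq T i i | i <- enum 'I_n.+1] r.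
  apply: prod_XsubC_eq; rewrite -charA -(char_poly_conj A P Pu).
  by rewrite char_poly_trig // big_map big_enum.
have sqrT : T *m T = P *m (A *m A) *m invmx P.
  by rewrite /T -!mulmxA mulKmx // !mulmxA.
split=> //.
  by rewrite -(mxtrace_conj A P Pu) -(perm_big _ diag_r) big_map big_enum.
rewrite -(mxtrace_conj (A *m A) P Pu) -sqrT -(perm_big _ diag_r).
by rewrite big_map big_enum; apply: eq_bigr => i _; rewrite trig_mx_sqr_diag.
Qed.

(* A rational eigenvalue of an integer matrix is an integer: it is a root of
   the monic integer characteristic polynomial, hence an algebraic integer. *)
Lemma rat_eigenvalue_int n (B : 'M[int]_n) (x : algC) :
  x \in Crat -> root (char_poly (map_mx intr B)) x -> x \in Num.int.
Proof.
move=> x_rat root_x; apply: Cint_rat_Aint => //.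
apply: root_monic_Aint root_x (char_poly_monic _) _.
rewrite -map_char_poly; apply/polyOverP => i.
by rewrite coef_map intr_int.
Qed.

Lemma int_lt0_le_N1 (R : archiNumDomainType) (x : R) :
  x \is a Num.int -> x < 0 -> x <= -1.
Proof.
move=> /intrP[z ->]; rewrite ltrz0 -[-1]/(-1 : int)%:~R ler_int.
by rewrite -ltzD1 addNr.
Qed.

Section RegularGraph.

Context {n k : nat} {e : rel 'I_n}.
Hypotheses (e_graph : is_graph e) (e_reg : regular e k).

Lemma adjmx_trace : \tr (adjmx e) = 0.
Proof.
by rewrite /mxtrace big1 // => i _; rewrite mxE e_graph.2.
Qed.

Lemma adjmx_row_sum i : \sum_j adjmx e i j = k%:R.
Proof.
under eq_bigr do rewrite mxE.
rewrite -natr_sum -(e_reg i) -sum1dep_card [in RHS]big_mkcond /=.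
by congr _%:R; apply: eq_bigr => j _; case: (e i j).
Qed.

(* The diagonal entries of A^2 are the degrees, so tr A^2 = n k. *)
Lemma adjmx_trace_sqr : \tr (adjmx e *m adjmx e) = k%:R *+ n.
Proof.
rewrite /mxtrace -[n in RHS]card_ord -sumr_const.
apply: eq_bigr => i _; rewrite mxE -(adjmx_row_sum i); apply: eq_bigr => j _.
by rewrite !mxE (e_graph.1 j i); case: (e i j); rewrite ?mul1r ?mul0r.
Qed.

Lemma regular_degree_gt0 : ~ edgeless e -> (0 < k)%N.
Proof.
move=> e_edge; rewrite lt0n; apply/eqP => k0; apply: e_edge => x y.
apply/negP => exy; have : y \in [set y | e x y] by rewrite inE.
by rewrite (cards0_eq (etrans (e_reg x) k0)) inE.
Qed.

End RegularGraph.

Lemma adjmx_int n (e : rel 'I_n) :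
  adjmx e = map_mx intr (\matrix_(i, j) (e i j)%:R : 'M[int]_n).
Proof. by apply/matrixP => i j; rewrite !mxE; case: (e i j). Qed.

Lemma symmetric_spectrum_traces {n} {e : rel 'I_n} {k m2 m3 : nat}
    {t2 t3 : algC} :
  is_graph e -> regular e k ->
  char_poly (adjmx e) =
    ('X - (k%:R)%:P) * ('X - t2%:P) ^+ m2 * ('X - t3%:P) ^+ m3
      * ('X - (- t3)%:P) ^+ m3 ->
  [/\ n = (1 + m2 + m3 + m3)%N, k%:R = - t2 * m2%:R &
      k%:R ^+ 2 + t2 ^+ 2 *+ m2 + t3 ^+ 2 *+ m3 + t3 ^+ 2 *+ m3 = k%:R *+ n].
Proof.
move=> e_graph e_reg charA.
set r := k%:R :: (nseq m2 t2 ++ nseq m3 t3 ++ nseq m3 (- t3)).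
have [size_r sum1 sum2] : [/\ size r = n, \tr (adjmx e) = \sum_(x <- r) x &
    \tr (adjmx e *m adjmx e) = \sum_(x <- r) x ^+ 2].
  apply: spectrum_power_sums; rewrite charA big_cons !big_cat /=.
  by rewrite !big_nseq !iter_mulr_1 !mulrA.
rewrite (adjmx_trace e_graph) big_cons !big_cat !big_nseq !iter_addr_0 /= in sum1.
rewrite (adjmx_trace_sqr e_graph e_reg) big_cons !big_cat !big_nseq in sum2.
rewrite /= !size_cat !size_nseq in size_r.
split.
- by rewrite -size_r add1n !addnA.
- apply/eqP; rewrite mulNr mulr_natr -addr_eq0.
  by rewrite mulNrn addrN addr0 in sum1; rewrite -sum1.
- by rewrite sum2 !iter_addr_0 sqrrN !addrA.
Qed.

(* The eigenvalue algebra: from n = 1 + m2 + 2 m3, k = -m2 t2 and the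
   second power sum k^2 + m2 t2^2 + 2 m3 t3^2 = n k we get the value of t3^2
   (with m3 > 0, so that n - m2 - 1 = 2 m3 is invertible). *)
Lemma third_eigenvalue_sqr (C : numFieldType) (n k m2 m3 : nat)
    (t2 t3 : C) :
  (0 < m3)%N -> n = (1 + m2 + m3 + m3)%N -> k%:R = - t2 * m2%:R ->
  k%:R ^+ 2 + t2 ^+ 2 *+ m2 + t3 ^+ 2 *+ m3 + t3 ^+ 2 *+ m3 = k%:R *+ n ->
  t3 ^+ 2 = k%:R * (1 + (t2 + 1) * (m2%:R + 1) / (n%:R - m2%:R - 1)).
Proof.
move=> m3_gt0 -> k_eq sum2; have m3_neq0 : m3%:R != 0 :> C.
  by rewrite pnatr_eq0 -lt0n.
have den : (1 + m2 + m3 + m3)%N%:R - m2%:R - 1 = 2 * m3%:R :> C.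
  by rewrite !natrD; ring.
rewrite den; apply: (mulIf (_ : 2 * m3%:R != 0)).
  by rewrite mulf_neq0 // pnatr_eq0.
have -> : t3 ^+ 2 * (2 * m3%:R) =
          k%:R *+ (1 + m2 + m3 + m3) - k%:R ^+ 2 - t2 ^+ 2 *+ m2.
  by rewrite -sum2; ring.
rewrite k_eq; field; exact: m3_neq0.
Qed.

Theorem theorem6 (n : nat) (e : rel 'I_n) (k b a : nat)
    (t2 t3 t4 : algC) (m2 m3 m4 : nat) :
  strongly_deza e n k b a ->
  (0 < m2)%N -> (0 < m3)%N -> (0 < m4)%N ->
  uniq [:: k%:R; t2; t3; t4] ->
  char_poly (adjmx e) =
    ('X - (k%:R)%:P) * ('X - t2%:P) ^+ m2 * ('X - t3%:P) ^+ m3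
      * ('X - t4%:P) ^+ m4 ->
  t4 = - t3 -> m3 = m4 ->
  [/\ t2 = - (k%:R) / m2%:R, t2 \in Num.int, t2 <= -1 &
      let s := sqrtC (k%:R * (1 + (t2 + 1) * (m2%:R + 1)
                                  / (n%:R - m2%:R - 1))) in
      (t3 = s /\ t4 = - s) \/ (t3 = - s /\ t4 = s)].
Proof.
move=> [[e_graph [_ [e_reg [_ [e_edge _]]]]] _ _] m2_gt0 m3_gt0 _ _.
move=> charA t4_eq m34; subst t4 m4.
have [n_eq k_eq sum2] := symmetric_spectrum_traces e_graph e_reg charA.
have m2_neq0 : m2%:R != 0 :> algC by rewrite pnatr_eq0 -lt0n.
have t2_eq : t2 = - k%:R / m2%:R by rewrite k_eq !mulNr opprK mulfK.
have t2_int : t2 \in Num.int.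
  have t2_root : root (char_poly (adjmx e)) t2.
    apply/rootP; rewrite charA !hornerE subrr expr0n eqn0Ngt m2_gt0 /=.
    by rewrite !(mulr0, mul0r).
  rewrite adjmx_int in t2_root; apply: rat_eigenvalue_int t2_root.
  by rewrite t2_eq rpredM ?rpredN ?rpredV ?rpred_nat.
have t2_lt0 : t2 < 0.
  have k_gt0 := regular_degree_gt0 e_reg e_edge.
  by rewrite t2_eq mulNr oppr_lt0 divr_gt0 // ltr0n.
split=> //; first exact: int_lt0_le_N1.
move=> s; have : t3 ^+ 2 = s ^+ 2.
  by rewrite sqrtCK; apply: third_eigenvalue_sqr m3_gt0 n_eq k_eq sum2.
move/eqP; rewrite eqf_sqr => /orP[] /eqP ->; [left | right]; by rewrite ?opprK.
Qed.
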